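(* If a complete theory $T$ has a witness of SSOP$_1$, then $T$ has an antichain tree. More precisely, if $\langle\varphi(x,y),\langle a_\eta\rangle_{\eta\in{}^{\omega>}2}\rangle$ witnesses SSOP$_1$, then there is $\langle b_\eta\rangle_{\eta\in{}^{\omega>}2}$ such that $\langle\varphi(x,y),\langle b_\eta\rangle\rangle$ is an antichain tree.
   Context: ${}^{\omega>}2$ is the binary tree with initial-segment order $\trianglelefteq$ and concatenation $^\frown$. $\langle\varphi,\langle a_\eta\rangle\rangle$ witnesses SSOP$_1$ if for every $X\subseteq{}^{\omega>}2$, $\{\varphi(x,a_\eta):\eta\in X\}$ is consistent iff there are no $\eta,\nu\in{}^{\omega>}2$ with $\eta^\frown\langle1\rangle,\eta^\frown\langle0\rangle^\frown\nu\in X$. $\langle\varphi,\langle b_\eta\rangle\rangle$ is an antichain tree if for every $X\subseteq{}^{\omega>}2$, $\{\varphi(x,b_\eta):\eta\in X\}$ is consistent iff the elements of $X$ are pairwise $\trianglelefteq$-incomparable. *)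

From mathcomp Require Import all_boot.
Set Implicit Arguments. Unset Strict Implicit. Unset Printing Implicit Defensive.

Record signature := Signature {
  funs : Type; fun_ar : funs -> nat;
  rels : Type; rel_ar : rels -> nat }.

Section FOL.
Variable L : signature.

Inductive term : Type :=
| tvar : nat -> term
| tapp : forall f : funs L, ('I_(fun_ar f) -> term) -> term.

Inductive formula : Type :=
| fbot : formula
| feq  : term -> term -> formula
| frel : forall r : rels L, ('I_(rel_ar r) -> term) -> formula
| fimp : formula -> formula -> formula
| fall : nat -> formula -> formula.

Fixpoint free_term (k : nat) (t : term) : Prop :=
  match t with
  | tvar i => i = k
  | tapp f args => exists j, free_term k (args j)
  end.

Fixpoint free (k : nat) (phi : formula) : Prop :=
  match phi with
  | fbot => False
  | feq t u => free_term k t \/ free_term k u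
  | frel r args => exists j, free_term k (args j)
  | fimp p q => free k p \/ free k q
  | fall i p => i <> k /\ free k p
  end.

Definition sentence (phi : formula) : Prop := forall k, ~ free k phi.

Record structure := Structure {
  carrier :> Type;
  inhabitant : carrier;
  fun_interp : forall f : funs L, ('I_(fun_ar f) -> carrier) -> carrier;
  rel_interp : forall r : rels L, ('I_(rel_ar r) -> carrier) -> Prop }.

Fixpoint eval (M : structure) (v : nat -> M) (t : term) : M :=
  match t with
  | tvar i => v i
  | tapp f args => @fun_interp M f (fun j => eval v (args j))
  end.

Definition update (M : structure) (v : nat -> M) (i : nat) (m : M) : nat -> M :=
  fun k => if k == i then m else v k.

Fixpoint sat (M : structure) (v : nat -> M) (phi : formula) : Prop :=
  match phi with
  | fbot => False
  | feq t u => eval v t = eval v u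
  | frel r args => @rel_interp M r (fun j => eval v (args j))
  | fimp p q => sat v p -> sat v q
  | fall i p => forall m : M, sat (update v i m) p
  end.

Definition theory := formula -> Prop.

Definition models (M : structure) (T : theory) : Prop :=
  forall sigma, T sigma -> forall v : nat -> M, sat v sigma.

Definition complete_theory (T : theory) : Prop :=
  [/\ (forall sigma, T sigma -> sentence sigma),
      (exists M : structure, models M T) &
      forall sigma, sentence sigma ->
        (forall M : structure, models M T -> forall v : nat -> M, sat v sigma) \/
        (forall M : structure, models M T -> forall v : nat -> M, ~ sat v sigma)].

(* A formula phi(x,y) is given by phi together with the list ys of the
   parameter variables y; x consists of all other variables.  A parameter
   tuple a is given as an assignment a : nat -> M, only its values on ys
   matter.  The instance phi(x,a) with x realized by c is evaluated under
   the assignment combining a (on ys) and c (elsewhere). *)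
Definition inst (M : structure) (ys : seq nat) (a c : nat -> M) : nat -> M :=
  fun z => if z \in ys then a z else c z.

(* {phi(x, a_eta) : eta in X} is consistent: every finite subset is realized
   (consistency with the elementary diagram of M, by compactness). *)
Definition consistent (M : structure) (ys : seq nat) (phi : formula)
    (a : seq bool -> nat -> M) (X : seq bool -> Prop) : Prop :=
  forall F : seq (seq bool), (forall eta, eta \in F -> X eta) ->
    exists c : nat -> M, forall eta, eta \in F -> sat (inst ys (a eta) c) phi.

End FOL.

(* ---------- Trees: ^{omega>}2 = seq bool, <1> = true, <0> = false,
   initial-segment order = prefix, concatenation = ++ ---------- *)

Definition ssop1_witness (L : signature) (M : structure L) (ys : seq nat)
    (phi : formula L) (a : seq bool -> nat -> M) : Prop :=
  forall X : seq bool -> Prop,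
    consistent ys phi a X <->
    ~ (exists eta nu : seq bool,
         X (eta ++ [:: true]) /\ X (eta ++ false :: nu)).

Definition antichain_tree (L : signature) (M : structure L) (ys : seq nat)
    (phi : formula L) (b : seq bool -> nat -> M) : Prop :=
  forall X : seq bool -> Prop,
    consistent ys phi b X <->
    (forall eta nu : seq bool, X eta -> X nu -> eta != nu ->
       ~~ prefix eta nu /\ ~~ prefix nu eta).

From mathcomp Require Import all_boot.

(** Reindex the witness along the embedding [g] of the binary tree given by
    [g <> = <1>] and [g (i :: s) = <0, i> ++ g s].  The pair [g eta], [g nu]
    has the SSOP_1-inconsistent shape [mu ++ <1>], [mu ++ <0> ++ nu'] exactly
    when [eta] is a proper initial segment of [nu], so [b_eta := a_(g eta)]
    is an antichain tree in the same model. *)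

Fixpoint tree_embed (s : seq bool) : seq bool :=
  if s is i :: s' then [:: false, i & tree_embed s'] else [:: true].

Definition ssop_split (s t : seq bool) : Prop :=
  exists mu nu, s = mu ++ [:: true] /\ t = mu ++ false :: nu.

Lemma ssop_split_neq {s t : seq bool} : ssop_split s t -> s != t.
Proof. by case=> mu [nu [-> ->]]; rewrite eqseq_cat // eqxx. Qed.

Lemma ssop_split_tree_embed_cat (e r : seq bool) (i : bool) :
  ssop_split (tree_embed e) (tree_embed (e ++ i :: r)).
Proof.
elim: e => [|j e [mu [nu [emb_e emb_er]]]] /=; first by exists [::], (i :: tree_embed r).
by exists [:: false, j & mu], nu; rewrite emb_e emb_er.
Qed.

Lemma ssop_split_tree_embed_prefix (e n : seq bool) :
  ssop_split (tree_embed e) (tree_embed n) -> prefix e n.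
Proof.
elim: e n => [|i e IHe] [|j n] //= [[|x [|y mu]] [nu []]] //=.
- by case=> _ _; case: (e).
- by case=> <- <- emb_e [<- emb_n]; rewrite eqxx IHe //; exists mu, nu.
Qed.

Lemma ssop_split_tree_embedP (e n : seq bool) :
  ssop_split (tree_embed e) (tree_embed n) <-> prefix e n /\ e != n.
Proof.
split=> [split_en | [/prefixP [[|i r] ->] ne_en]].
- split; first exact: ssop_split_tree_embed_prefix.
  by apply: contraNneq (ssop_split_neq split_en) => ->.
- by rewrite cats0 eqxx in ne_en.
- exact: ssop_split_tree_embed_cat.
Qed.

Lemma seq_preimage {T U : eqType} {f : T -> U} {P : T -> Prop} {s : seq U} :
  (forall u, u \in s -> exists2 t, P t & u = f t) ->
  exists2 s0, (forall t, t \in s0 -> P t) & s = map f s0.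
Proof.
elim: s => [|u s IHs] s_im; first by exists [::].
have [t Pt ->] := s_im u (mem_head u s).
have [|s0 s0P ->] := IHs; first by move=> v sv; apply: s_im; rewrite inE sv orbT.
by exists (t :: s0) => // t'; rewrite inE => /predU1P [->|/s0P].
Qed.

Lemma consistent_comp {L : signature} {M : structure L} (ys : seq nat)
    (phi : formula L) (a : seq bool -> nat -> M) (f : seq bool -> seq bool)
    (X : seq bool -> Prop) :
  consistent ys phi (a \o f) X <->
  consistent ys phi a (fun m => exists2 e, X e & m = f e).
Proof.
split=> [consX F FY | consY F FX].
- have [F0 F0X ->] := seq_preimage FY.
  have [c c_sat] := consX F0 F0X.
  by exists c => _ /mapP [e F0e ->]; exact: c_sat.
- have image_F m : m \in map f F -> exists2 e, X e & m = f e.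
    by case/mapP=> e Fe ->; exists e; first exact: FX.
  have [c c_sat] := consY _ image_F.
  by exists c => e Fe; apply: c_sat; exact: map_f.
Qed.

Lemma tree_embed_ssop_pairP (X : seq bool -> Prop) :
  (exists eta nu, (exists2 e, X e & eta ++ [:: true] = tree_embed e) /\
                  (exists2 n, X n & eta ++ false :: nu = tree_embed n)) <->
  (exists e n, [/\ X e, X n, prefix e n & e != n]).
Proof.
split=> [[mu [nu [[e Xe emb_e] [n Xn emb_n]]]] | [e [n [Xe Xn pre_en ne_en]]]].
- have [] := proj1 (ssop_split_tree_embedP e n).
    by exists mu, nu; rewrite -emb_e -emb_n.
  by exists e, n.
- have [mu [nu [emb_e emb_n]]] := proj2 (ssop_split_tree_embedP e n) (conj pre_en ne_en).
  by exists mu, nu; split; [exists e | exists n].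
Qed.

Lemma no_proper_prefix_antichain (T : eqType) (X : seq T -> Prop) :
  ~ (exists e n, [/\ X e, X n, prefix e n & e != n]) <->
  (forall e n, X e -> X n -> e != n -> ~~ prefix e n /\ ~~ prefix n e).
Proof.
split=> [no_pair e n Xe Xn ne_en | antichain [e [n [Xe Xn pre_en ne_en]]]].
- by split; apply/negP => pre; apply: no_pair; [exists e, n | exists n, e; rewrite eq_sym].
- by have [/negP] := antichain e n Xe Xn ne_en.
Qed.

Theorem proposition5p6 (L : signature) (T : theory L)
  (hT : complete_theory T) (phi : formula L) (ys : seq nat) :
  (exists (M : structure L) (a : seq bool -> nat -> M),
      models M T /\ ssop1_witness ys phi a) ->
  exists (N : structure L) (b : seq bool -> nat -> N),
      models N T /\ antichain_tree ys phi b.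
Proof.
move=> [M [a [MT ssop1_a]]].
exists M, (a \o tree_embed); split=> // X.
apply: iff_trans (consistent_comp ys phi a tree_embed X) _.
apply: iff_trans (ssop1_a _) _.
apply: iff_trans (not_iff_compat (tree_embed_ssop_pairP X)) _.
exact: no_proper_prefix_antichain.
Qed.
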